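(* Let $A$ and $B$ be probabilistic models, let $\phi:A\to B$ be an embedding, and let $\psi:B\to A$ be a morphism with $\psi\circ\phi=\mathrm{id}_{A}$ (the identity on $X(A)$). Then $\psi$ is test-preserving, i.e. $\psi(F)\in\mathcal{M}(A)$ for every $F\in\mathcal{M}(B)$.
   Context: A test space is a collection $\mathcal{M}$ of nonempty sets (''tests'') that is irredundant ($E,F\in\mathcal{M}$, $E\subseteq F$ imply $E=F$); $X=\bigcup\mathcal{M}$ is its outcome set. A probability weight is a function $\alpha:X\to[0,1]$ with $\sum_{x\in E}\alpha(x)=1$ for all $E\in\mathcal{M}$. A probabilistic model $A$ is a pair $(\mathcal{M}(A),\Omega(A))$ with $\mathcal{M}(A)$ a test space with outcome set $X(A)$ and $\Omega(A)$ a set of probability weights (states); standing assumptions: $\Omega(A)$ is convex, closed under uniform limits, and positive (for every $x\in X(A)$ there is $\alpha\in\Omega(A)$ with $\alpha(x)>0$). An event is a subset of some test; $\alpha(a)=\sum_{x\in a}\alpha(x)$. Events $a,b$ are orthogonal ($a\perp b$) if disjoint with $a\cup b$ an event; complements if $a\perp b$ and $a\cup b$ is a test; perspective ($a\sim b$) if they have a common complement; for outcomes, $x\perp y$ means $\{x\}\perp\{y\}$. A morphism $\phi:A\to B$ is a map $\phi:X(A)\to X(B)$ such that (i) $x\perp y\Rightarrow\phi(x)\perp\phi(y)$; (ii) $\phi(a)$ is an event of $B$ for every event $a$ of $A$; (iii) $a\sim b\Rightarrow\phi(a)\sim\phi(b)$; (iv) for every $\beta\in\Omega(B)$ there are $\alpha\in\Omega(A)$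 and $t\ge0$ with $\beta(\phi(x))=t\alpha(x)$ for all $x\in X(A)$. A morphism is test-preserving if it maps tests to tests, and an embedding if it is test-preserving and injective. *)

From HB Require Import structures.
From mathcomp Require Import all_boot all_order all_algebra.
From mathcomp Require Import all_classical all_reals all_analysis.
Set Implicit Arguments. Unset Strict Implicit. Unset Printing Implicit Defensive.
Import Order.TTheory GRing.Theory Num.Theory.
Local Open Scope classical_set_scope.
Local Open Scope ring_scope.

Section TestSpaces.
Variable R : realType.

Definition test_space (T : choiceType) (M : set (set T)) : Prop :=
  (forall E, M E -> E !=set0) /\
  (forall E F, M E -> M F -> E `<=` F -> E = F).

Definition event (T : choiceType) (M : set (set T)) (a : set T) : Prop :=
  exists2 E, M E & a `<=` E.

Definition wval (T : choiceType) (alpha : T -> R) (a : set T) : \bar R :=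
  (\esum_(x in a) (alpha x)%:E)%E.

Definition prob_weight (T : choiceType) (M : set (set T)) (alpha : T -> R) : Prop :=
  (forall x, 0 <= alpha x <= 1) /\
  (forall E, M E -> wval alpha E = 1%E).

(* A probabilistic model whose outcome set X(A) is the carrier type T. *)
Record model (T : choiceType) := Model {
  tests : set (set T);
  states : set (T -> R);
  tests_ts : test_space tests;
  tests_cover : \bigcup_(E in tests) E = setT;
  states_pw : forall alpha, states alpha -> prob_weight tests alpha;
  states_convex : forall alpha beta (t : R), states alpha -> states beta ->
     0 <= t <= 1 -> states (fun x => t * alpha x + (1 - t) * beta x);
  states_closed : forall (a : nat -> T -> R) (alpha : T -> R),
     (forall n, states (a n)) ->
     (forall e : R, 0 < e -> exists N : nat, forall n, (N <= n)%N ->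
         forall x, `|a n x - alpha x| < e) ->
     states alpha;
  states_pos : forall x, exists2 alpha, states alpha & 0 < alpha x
}.

Definition orth (T : choiceType) (M : set (set T)) (a b : set T) : Prop :=
  a `&` b = set0 /\ event M (a `|` b).

Definition compl_ev (T : choiceType) (M : set (set T)) (a b : set T) : Prop :=
  orth M a b /\ M (a `|` b).

Definition persp (T : choiceType) (M : set (set T)) (a b : set T) : Prop :=
  exists c, compl_ev M a c /\ compl_ev M b c.

Definition orth_pt (T : choiceType) (M : set (set T)) (x y : T) : Prop :=
  orth M [set x] [set y].

Definition morphism (TA TB : choiceType) (A : model TA) (B : model TB)
    (phi : TA -> TB) : Prop :=
  [/\ (forall x y, orth_pt (tests A) x y -> orth_pt (tests B) (phi x) (phi y)),
      (forall a, event (tests A) a -> event (tests B) (phi @` a)),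
      (forall a b, persp (tests A) a b -> persp (tests B) (phi @` a) (phi @` b)) &
      (forall beta, states B beta ->
          exists alpha, exists2 t : R, states A alpha /\ 0 <= t &
             forall x, beta (phi x) = t * alpha x)].

Definition test_preserving (TA TB : choiceType) (A : model TA) (B : model TB)
    (phi : TA -> TB) : Prop :=
  forall E, tests A E -> tests B (phi @` E).

Definition embedding (TA TB : choiceType) (A : model TA) (B : model TB)
    (phi : TA -> TB) : Prop :=
  [/\ morphism A B phi, test_preserving A B phi & injective phi].

End TestSpaces.

(* A state alpha of A pulls back along psi to a multiple t * beta of a state of B.
   Evaluating on phi(E) for a test E of A gives alpha(E) = t * beta(phi E), and both
   sides are weights of tests, so t = 1: every state of A is a state of B read
   through psi.  Since psi separates the orthogonal outcomes of a test F of B, it is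
   injective on F, so alpha(psi F) = beta(F) = 1 for every state alpha.  Finally
   psi(F) is an event, contained in a test E; the outcomes of E outside psi(F) get
   weight 0 in every state, so by positivity there are none and psi(F) = E. *)

From mathcomp Require Import all_boot all_order all_algebra.
From mathcomp Require Import all_classical all_reals all_analysis.
Local Open Scope classical_set_scope.
Local Open Scope ring_scope.

Set Implicit Arguments.
Unset Strict Implicit.
Unset Printing Implicit Defensive.
Import Order.TTheory GRing.Theory Num.Theory.

Lemma ge0_esumZl (R : realType) (T : choiceType) (I : set T) (f : T -> \bar R)
    (r : R) : 0 <= r -> (forall i, (0 <= f i)%E) ->
  (\esum_(i in I) (r%:E * f i) = r%:E * \esum_(i in I) f i)%E.
Proof.
move=> r0 f0; rewrite /esum -ereal_supZl //; last first.
  by apply/set0P; exists 0%E; exists set0; [exact: fsets_set0 | rewrite fsbig_set0].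
rewrite image_comp; congr ereal_sup; apply: eq_imagel => X _ /=.
by rewrite ge0_mule_fsumr.
Qed.

Section Weights.
Variables (R : realType) (T : choiceType) (alpha : T -> R).
Hypothesis alpha_ge0 : forall x, 0 <= alpha x.

Lemma wval_image (U : choiceType) (f : U -> T) (F : set U) :
  set_inj F f -> wval alpha (f @` F) = wval (alpha \o f) F.
Proof. by move=> f_inj; rewrite /wval esum_image. Qed.

Lemma wvalZ (t : R) (F : set T) : 0 <= t ->
  wval (fun x => t * alpha x) F = (t%:E * wval alpha F)%E.
Proof.
by move=> t0; rewrite /wval -ge0_esumZl // => x; rewrite lee_fin.
Qed.

Lemma wval_subset_setD (a b : set T) : b `<=` a ->
  wval alpha a = (wval alpha b + wval alpha (a `\` b))%E.
Proof.
move=> ba; rewrite /wval (esumID b) => [|x _]; last by rewrite lee_fin.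
by rewrite setIidr.
Qed.

Lemma wval_ge_pt (a : set T) x : a x -> ((alpha x)%:E <= wval alpha a)%E.
Proof.
move=> ax; apply: esum_ge; exists [set x]; last by rewrite fsbig_set1.
by split; [exact: finite_set1 | move=> _ ->].
Qed.

End Weights.

Section ModelFacts.
Variables (R : realType) (T : choiceType) (A : model R T).

Lemma state_ge0 alpha x : states A alpha -> 0 <= alpha x.
Proof. by move=> /states_pw[/(_ x)/andP[]]. Qed.

Lemma state_test alpha E : states A alpha -> tests A E -> wval alpha E = 1%E.
Proof. by move=> /states_pw[_]; apply. Qed.

Lemma outcome_in_test x : exists2 E, tests A E & E x.
Proof.
by have : setT x by []; rewrite -(tests_cover A) => -[E]; exists E.
Qed.

Lemma full_weight_eq_test a E : tests A E -> a `<=` E ->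
  (forall alpha, states A alpha -> wval alpha a = 1%E) -> a = E.
Proof.
move=> EA aE a1; apply/seteqP; split => // x Ex; apply: contrapT => Nax.
have [alpha Salpha alpha_x] := states_pos A x.
have alpha_ge0 y : 0 <= alpha y by exact: state_ge0.
have := wval_subset_setD alpha_ge0 aE.
rewrite (state_test Salpha EA) (a1 _ Salpha) => one_eq.
have := wval_ge_pt alpha (conj Ex Nax : (E `\` a) x).
move/(leeD2l 1%E); rewrite -one_eq -EFinD lee_fin.
by rewrite gerDl leNgt alpha_x.
Qed.

End ModelFacts.

Lemma orth_pt_neq (T : choiceType) (M : set (set T)) x y : orth_pt M x y -> x <> y.
Proof. by move=> [xy0 _] exy; have : ([set x] `&` [set y]) y by []; rewrite xy0. Qed.

Lemma orth_pt_test (T : choiceType) (M : set (set T)) F x y :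
  M F -> F x -> F y -> x <> y -> orth_pt M x y.
Proof.
move=> MF Fx Fy xy; split; last by exists F => // _ [] ->.
by apply/seteqP; split => // _ [-> /= yx]; exact: xy.
Qed.

Lemma morphism_set_inj_test (R : realType) (TA TB : choiceType)
    (A : model R TA) (B : model R TB) (f : TA -> TB) F :
  morphism A B f -> tests A F -> set_inj F f.
Proof.
move=> [f_orth _ _ _] AF x y Fx Fy fxy; apply: contrapT => xy.
exact: (orth_pt_neq (f_orth _ _ (orth_pt_test AF (set_mem Fx) (set_mem Fy) xy)) fxy).
Qed.

Lemma retraction_pullback_state (R : realType) (TA TB : choiceType)
    (A : model R TA) (B : model R TB) (phi : TA -> TB) (psi : TB -> TA) alpha :
  test_preserving A B phi -> injective phi -> morphism B A psi -> cancel phi psi ->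
  states A alpha -> exists2 beta, states B beta & alpha \o psi = beta.
Proof.
move=> phiT phi_inj [_ _ _ psi_states] psiK Salpha.
have [beta [t [Sbeta t0] psi_alpha]] := psi_states _ Salpha.
exists beta => //; apply/funext => y /=; rewrite psi_alpha.
have [E EA _] := outcome_in_test A (psi y).
suff -> : t = 1 by rewrite mul1r.
have beta_ge0 z : 0 <= beta z by exact: state_ge0 Sbeta.
have : wval (alpha \o psi) (phi @` E) = 1%E.
  rewrite wval_image; last by move=> ? ? _ _; exact: phi_inj.
  rewrite (_ : _ \o phi = alpha) ?(state_test Salpha EA) //.
  by apply/funext => x /=; rewrite psiK.
rewrite (_ : alpha \o psi = fun z => t * beta z); last exact/funext.
by rewrite wvalZ // (state_test Sbeta (phiT _ EA)) mule1 => -[].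
Qed.

Theorem lemma1p23 (R : realType) (TA TB : choiceType)
    (A : model R TA) (B : model R TB) (phi : TA -> TB) (psi : TB -> TA) :
  embedding A B phi -> morphism B A psi ->
  (forall x, psi (phi x) = x) ->
  test_preserving B A psi.
Proof.
move=> [_ phiT phi_inj] psiM psiK F BF.
have [E EA psiFE] : event (tests A) (psi @` F).
  by case: psiM => _ psi_event _ _; apply: psi_event; exists F.
suff -> : psi @` F = E by [].
apply: (full_weight_eq_test EA psiFE) => alpha Salpha.
rewrite wval_image; last exact: morphism_set_inj_test psiM BF.
have [beta Sbeta psi_beta] := retraction_pullback_state phiT phi_inj psiM psiK Salpha.
by rewrite psi_beta; exact: state_test Sbeta BF.
Qed.
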